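(* Let $\{|k\rangle\}_{k=1}^n$ be an orthonormal basis of $\mathbb{C}^n$ and let $$\tilde{\mathcal{L}}(\rho)=-i[H,\rho]+\sum_a\Big(M^a\rho M^{a\dagger}-\tfrac12\{M^{a\dagger}M^a,\rho\}\Big)$$ be a Lindblad generator, with $H$ self-adjoint and $M^a$ arbitrary $n\times n$ matrices (finitely many). Suppose $\tilde{\mathcal{L}}(|i\rangle\langle i|)=0$ for every $i$. Then $H$ and all $M^a$ are diagonal in the basis $\{|k\rangle\}$; writing $M^a=\sum_k n^a_k|k\rangle\langle k|$ and $H=\sum_k h_k|k\rangle\langle k|$, one has for all $i\neq j$ $$\tilde{\mathcal{L}}(|i\rangle\langle j|)=-D_{ij}\,|i\rangle\langle j|,\qquad D_{ij}=\tfrac12\sum_a\big(|n^a_i|^2+|n^a_j|^2-2n^a_i\bar n^a_j\big)+i(h_i-h_j).$$ In particular, a Lindblad generator that couples only phases to phases does not mix distinct phases.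
   Context: For a density matrix $\rho$, the off-diagonal entries $\langle i|\rho|j\rangle$, $i\neq j$, are called phases and the diagonal entries probabilities. *)

From HB Require Import structures.
From mathcomp Require Import all_boot all_order all_algebra all_field.
Set Implicit Arguments. Unset Strict Implicit. Unset Printing Implicit Defensive.
Import Order.TTheory GRing.Theory Num.Theory.
Local Open Scope ring_scope.

Definition adjmx (m p : nat) (A : 'M[algC]_(m, p)) : 'M[algC]_(p, m) :=
  (map_mx (fun z : algC => z^*) A)^T.

(* The orthonormal basis {|k>} is given by the columns of U, with
   adjmx U *m U = 1 (orthonormality of the columns). *)
Definition ket (n : nat) (U : 'M[algC]_n) (k : 'I_n) : 'cV[algC]_n := col k U.
Definition bra (n : nat) (U : 'M[algC]_n) (k : 'I_n) : 'rV[algC]_n := adjmx (ket U k).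

Definition ketbra (n : nat) (U : 'M[algC]_n) (i j : 'I_n) : 'M[algC]_n :=
  ket U i *m bra U j.

Definition lindblad (n : nat) (H : 'M[algC]_n) (Ms : seq 'M[algC]_n)
  (rho : 'M[algC]_n) : 'M[algC]_n :=
  - ('i *: (H *m rho - rho *m H))
  + \sum_(M <- Ms)
      (M *m rho *m adjmx M
       - (1/2 : algC) *: (adjmx M *m M *m rho + rho *m (adjmx M *m M))).

Definition mxel (n : nat) (U : 'M[algC]_n) (A : 'M[algC]_n) (k l : 'I_n) : algC :=
  (bra U k *m A *m ket U l) 0 0.

Definition dcoef (n : nat) (U : 'M[algC]_n) (A : 'M[algC]_n) (k : 'I_n) : algC :=
  mxel U A k k.

Definition Dcoef (n : nat) (U : 'M[algC]_n) (H : 'M[algC]_n) (Ms : seq 'M[algC]_n)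
  (i j : 'I_n) : algC :=
  (1/2 : algC) * \sum_(M <- Ms)
     (`|dcoef U M i| ^+ 2 + `|dcoef U M j| ^+ 2
      - 2 * dcoef U M i * (dcoef U M j)^*)
  + 'i * (dcoef U H i - dcoef U H j).

From HB Require Import structures.
From mathcomp Require Import all_boot all_order all_algebra all_field.
From mathcomp Require Import ring.
Import Order.TTheory GRing.Theory Num.Theory.
Local Open Scope ring_scope.

(* Conjugating by the unitary U sends |i><j| to the matrix unit E_ij and
   commutes with the generator, so it suffices to work in the standard basis.
   There the (k,k) entry of L(E_ii), k != i, is sum_a |M^a_ki|^2, the rate at
   which population leaks from i to k; stationarity kills it, so every M^a is
   diagonal.  The (k,i) entry of L(E_ii) then reduces to -i H_ki, so H is
   diagonal as well, and a generator built from diagonal matrices scales each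
   E_ij. *)

Set Implicit Arguments.
Unset Strict Implicit.
Unset Printing Implicit Defensive.

Section DeltaProducts.
Variable R : pzRingType.

Lemma mulmx_deltaE m n p (A : 'M[R]_(m, n)) (i : 'I_n) (j : 'I_p) k l :
  (A *m delta_mx i j) k l = A k i *+ (l == j).
Proof.
rewrite mxE (bigD1 i) //= big1 => [|q /negPf qi]; last by rewrite mxE qi mulr0.
by rewrite mxE eqxx addr0 mulr_natr.
Qed.

Lemma mul_delta_mxE m n p (A : 'M[R]_(n, p)) (i : 'I_m) (j : 'I_n) k l :
  (delta_mx i j *m A) k l = A j l *+ (k == i).
Proof.
rewrite mxE (bigD1 j) //= big1 => [|q /negPf qj]; last by rewrite mxE qj andbF mul0r.
by rewrite mxE eqxx andbT addr0 mulr_natl.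
Qed.

Lemma mulmx_delta_mulmxE m n p q (A : 'M[R]_(m, n)) (B : 'M[R]_(p, q)) i j k l :
  (A *m delta_mx i j *m B) k l = A k i * B j l.
Proof.
by rewrite -(mul_delta_mx (0 : 'I_1)) mulmxA -colE -mulmxA -rowE mxE big_ord1 !mxE.
Qed.

Lemma diag_mulmx_delta n p (A : 'M[R]_n) i (j : 'I_p) :
  is_diag_mx A -> A *m delta_mx i j = A i i *: delta_mx i j.
Proof.
move=> /is_diag_mxP Adiag; apply/matrixP => k l; rewrite mulmx_deltaE !mxE.
case: (eqVneq k i) => [->|ki]; last by rewrite Adiag // mul0rn mulr0.
by rewrite mulr_natr.
Qed.

Lemma diag_mul_delta_mx m n (A : 'M[R]_n) (i : 'I_m) j :
  is_diag_mx A -> delta_mx i j *m A = A j j *: delta_mx i j.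
Proof.
move=> /is_diag_mxP Adiag; apply/matrixP => k l; rewrite mul_delta_mxE !mxE.
case: (eqVneq l j) => [->|lj]; first by rewrite andbT mulr_natr.
by rewrite Adiag 1?eq_sym // mul0rn andbF mulr0.
Qed.

Lemma diag_sum_delta n (A : 'M[R]_n) :
  is_diag_mx A -> A = \sum_(k < n) A k k *: delta_mx k k.
Proof.
case/diag_mxP => d ->; rewrite [LHS]diag_mx_sum_delta.
by apply: eq_bigr => k _; rewrite !mxE eqxx.
Qed.

End DeltaProducts.

Lemma adjmxE m p (A : 'M[algC]_(m, p)) i j : adjmx A i j = (A j i)^*.
Proof. by rewrite !mxE. Qed.

Lemma adjmxM m p q (A : 'M[algC]_(m, p)) (B : 'M[algC]_(p, q)) :
  adjmx (A *m B) = adjmx B *m adjmx A.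
Proof. by rewrite /adjmx map_mxM trmx_mul. Qed.

Lemma adjmxK m p (A : 'M[algC]_(m, p)) : adjmx (adjmx A) = A.
Proof. by apply/matrixP => i j; rewrite !adjmxE conjCK. Qed.

Lemma adjmx_delta m p (i : 'I_m) (j : 'I_p) : adjmx (delta_mx i j) = delta_mx j i.
Proof. by rewrite /adjmx map_delta_mx trmx_delta. Qed.

Lemma is_diag_adjmx n (A : 'M[algC]_n) : is_diag_mx A -> is_diag_mx (adjmx A).
Proof.
move=> /is_diag_mxP Adiag; apply/is_diag_mxP => i j ij.
by rewrite adjmxE Adiag 1?eq_sym ?conjC0.
Qed.

Section ChangeOfBasis.
Variables (n : nat) (U : 'M[algC]_n).
Hypothesis unitaryU : adjmx U *m U = 1%:M.

Definition in_basis (A : 'M[algC]_n) := adjmx U *m A *m U.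

Lemma in_basis0 : in_basis 0 = 0.
Proof. by rewrite /in_basis mulmx0 mul0mx. Qed.

Lemma in_basisD : {morph in_basis : A B / A + B}.
Proof. by move=> A B; rewrite /in_basis mulmxDr mulmxDl. Qed.

Lemma in_basisN : {morph in_basis : A / - A}.
Proof. by move=> A; rewrite /in_basis mulmxN mulNmx. Qed.

Lemma in_basisB : {morph in_basis : A B / A - B}.
Proof. by move=> A B; rewrite in_basisD in_basisN. Qed.

Lemma in_basisZ a : {morph in_basis : A / a *: A}.
Proof. by move=> A; rewrite /in_basis -scalemxAr -scalemxAl. Qed.

Lemma in_basis_sum (I : Type) (r : seq I) (F : I -> 'M[algC]_n) :
  in_basis (\sum_(i <- r) F i) = \sum_(i <- r) in_basis (F i).
Proof. exact: (big_morph _ in_basisD in_basis0). Qed.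

Lemma unitary_mulmx_adj : U *m adjmx U = 1%:M.
Proof. exact: mulmx1C. Qed.

Lemma in_basisM A B : in_basis (A *m B) = in_basis A *m in_basis B.
Proof.
by rewrite /in_basis !mulmxA -[_ *m U *m adjmx U]mulmxA unitary_mulmx_adj mulmx1.
Qed.

Lemma in_basis_adjmx A : in_basis (adjmx A) = adjmx (in_basis A).
Proof. by rewrite /in_basis !adjmxM adjmxK mulmxA. Qed.

Lemma in_basis_inj : injective in_basis.
Proof.
apply: (can_inj (g := fun X => U *m X *m adjmx U)) => A.
by rewrite /in_basis !mulmxA unitary_mulmx_adj mul1mx -mulmxA unitary_mulmx_adj mulmx1.
Qed.

Lemma in_basis_ketbra i j : in_basis (ketbra U i j) = delta_mx i j.
Proof.
rewrite /in_basis /ketbra /bra /ket !colE adjmxM adjmx_delta !mulmxA unitaryU.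
by rewrite mul1mx -mulmxA unitaryU mulmx1 mul_delta_mx.
Qed.

Lemma dcoef_in_basis A k : dcoef U A k = in_basis A k k.
Proof.
rewrite /dcoef /mxel /bra /ket /in_basis !colE adjmxM adjmx_delta -rowE.
by rewrite -row_mul mulmxA -row_mul -colE !mxE.
Qed.

Lemma in_basis_lindblad H Ms rho :
  in_basis (lindblad H Ms rho) =
  lindblad (in_basis H) (map in_basis Ms) (in_basis rho).
Proof.
rewrite /lindblad in_basisD in_basisN in_basisZ in_basisB !in_basisM in_basis_sum big_map.
congr (_ + _); apply: eq_bigr => M _.
by rewrite in_basisB in_basisZ in_basisD !in_basisM in_basis_adjmx.
Qed.

Lemma diag_in_basis_sum_ketbra A :
  is_diag_mx (in_basis A) -> A = \sum_(k < n) dcoef U A k *: ketbra U k k.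
Proof.
move=> diagA; apply: in_basis_inj; rewrite in_basis_sum [LHS](diag_sum_delta diagA).
by apply: eq_bigr => k _; rewrite in_basisZ in_basis_ketbra dcoef_in_basis.
Qed.

End ChangeOfBasis.

Section LindbladOnMatrixUnits.
Variables (n : nat) (h : 'M[algC]_n) (ms : seq 'M[algC]_n).

Definition dissipator_eigenvalue (i j : 'I_n) :=
  \sum_(M <- ms) (M i i * (M j j)^* - 1/2 * (`|M i i| ^+ 2 + `|M j j| ^+ 2)).

Lemma lindblad_delta_mx_diag_entry i k : k != i ->
  lindblad h ms (delta_mx i i) k k = \sum_(M <- ms) `|M k i| ^+ 2.
Proof.
move=> ki; rewrite /lindblad !(mulmx_deltaE, mul_delta_mxE, summxE, mxE) (negPf ki).
rewrite !mulr0n subrr mulr0 oppr0 add0r; apply: eq_bigr => M _.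
rewrite !(mulmx_delta_mulmxE, mulmx_deltaE, mul_delta_mxE, mxE) (negPf ki).
by rewrite !mulr0n addr0 mulr0 subr0 normCK.
Qed.

Lemma stationary_jumps_diag :
  (forall i, lindblad h ms (delta_mx i i) = 0) -> {in ms, forall M, is_diag_mx M}.
Proof.
move=> stat M Mms; apply/is_diag_mxP => k i ki.
move: (lindblad_delta_mx_diag_entry ki); rewrite stat mxE => /esym/eqP.
rewrite psumr_eq0 => [/allP/(_ M Mms)|N _]; last exact: exprn_ge0.
by rewrite sqrf_eq0 normr_eq0 => /eqP.
Qed.

Lemma lindblad_delta_of_diag_jumps i j : {in ms, forall M, is_diag_mx M} ->
  lindblad h ms (delta_mx i j) =
  - ('i *: (h *m delta_mx i j - delta_mx i j *m h))
  + dissipator_eigenvalue i j *: delta_mx i j.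
Proof.
move=> diag_ms; rewrite /lindblad /dissipator_eigenvalue scaler_suml; congr (_ + _).
rewrite big_seq [RHS]big_seq; apply: eq_bigr => M /diag_ms diagM.
have diagMadj := is_diag_adjmx diagM.
rewrite diag_mulmx_delta // -scalemxAl diag_mul_delta_mx //.
rewrite -mulmxA diag_mulmx_delta // -scalemxAr diag_mulmx_delta //.
rewrite mulmxA diag_mul_delta_mx // -scalemxAl diag_mul_delta_mx //.
by rewrite !scalerA -scalerDl scalerA -scalerBl !adjmxE normCK normCKC.
Qed.

Lemma stationary_hamiltonian_diag :
  (forall i, lindblad h ms (delta_mx i i) = 0) ->
  {in ms, forall M, is_diag_mx M} -> is_diag_mx h.
Proof.
move=> stat diag_ms; apply/is_diag_mxP => k i; rewrite val_eqE => ki.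
move: (congr1 (fun X : 'M[algC]_n => X k i) (stat i)).
rewrite lindblad_delta_of_diag_jumps // !(mulmx_deltaE, mul_delta_mxE, mxE).
rewrite (negPf ki) eqxx /= mulr0n subr0 mulr1n mulr0 addr0 => /eqP.
by rewrite oppr_eq0 mulf_eq0 (negPf (neq0Ci _)) => /eqP.
Qed.

Lemma lindblad_delta_of_diag i j :
  is_diag_mx h -> {in ms, forall M, is_diag_mx M} ->
  lindblad h ms (delta_mx i j) =
  (dissipator_eigenvalue i j - 'i * (h i i - h j j)) *: delta_mx i j.
Proof.
move=> diagh diag_ms; rewrite lindblad_delta_of_diag_jumps //.
rewrite diag_mulmx_delta // diag_mul_delta_mx // -scalerBl scalerA.
by rewrite addrC scalerBl.
Qed.

End LindbladOnMatrixUnits.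

Theorem mainTheorem3 (n : nat) (U : 'M[algC]_n) (H : 'M[algC]_n)
  (Ms : seq 'M[algC]_n)
  (hU : adjmx U *m U = 1%:M)
  (hH : adjmx H = H)
  (hstat : forall i : 'I_n, lindblad H Ms (ketbra U i i) = 0) :
  (H = \sum_(k < n) dcoef U H k *: ketbra U k k)
  /\ (forall M, M \in Ms -> M = \sum_(k < n) dcoef U M k *: ketbra U k k)
  /\ (forall i j : 'I_n, i != j ->
        lindblad H Ms (ketbra U i j) = - Dcoef U H Ms i j *: ketbra U i j).
Proof.
pose h := in_basis U H; pose ms := map (in_basis U) Ms.
have stat i : lindblad h ms (delta_mx i i) = 0.
  by rewrite -(in_basis_ketbra hU) -(in_basis_lindblad hU) hstat in_basis0.
have diag_ms := stationary_jumps_diag stat.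
have diag_h := stationary_hamiltonian_diag stat diag_ms.
split; first exact (diag_in_basis_sum_ketbra hU diag_h).
split=> [M MMs|i j _].
  exact (diag_in_basis_sum_ketbra hU (diag_ms _ (map_f _ MMs))).
apply: (in_basis_inj hU).
rewrite (in_basis_lindblad hU) in_basisZ !(in_basis_ketbra hU) lindblad_delta_of_diag //.
congr (_ *: _); rewrite /Dcoef /dissipator_eigenvalue big_map !dcoef_in_basis.
rewrite opprD mulr_sumr -sumrN; congr (_ - _); apply: eq_bigr => M _.
by rewrite !dcoef_in_basis !normCK; field.
Qed.
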